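(* Assume $0<\theta_1\le\theta_2\le\dots\le\theta_N$, $m_i>0$, $\sigma>0$, $p>0$, and let $\mathbf y\in\mathbb R^N_+$ solve $$\sum_{k=1}^N m_k(y_k-y_i)+\sigma(\theta_i-y_i^p)y_i=0,\qquad i=1,\dots,N.$$ Then $\theta_1\le y_1^p\le y_2^p\le\dots\le y_N^p\le\theta_N$, and for every $i$, $$y_i^p\ge\theta_i+\frac{m_{\ge i}-M}{\sigma},\qquad m_{\ge i}=m_i+\dots+m_N,\ M=m_1+\dots+m_N.$$ Moreover, for $i\ne j$, $\theta_i=\theta_j$ if and only if $y_i=y_j$.
   Context: $\mathbb R^N_+$ denotes the set of vectors with all coordinates strictly positive. *)

From mathcomp Require Import all_boot all_order all_algebra.
From mathcomp Require Import all_classical all_reals all_analysis.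

From mathcomp Require Import all_boot all_order all_algebra.
From mathcomp Require Import all_classical all_reals all_analysis.
From mathcomp Require Import ring lra zify.
Import Order.TTheory GRing.Theory Num.Theory.
Local Open Scope ring_scope.

(* Write S = sum_k m_k y_k and M = sum_k m_k.  Since
   sum_k m_k (y_k - y_i) = S - M y_i, the i-th equation can be solved for
   the p-th power of y_i:
       y_i^p = theta_i + (S / y_i - M) / sigma.                  (formula)
   The correction term (S / x - M) / sigma is strictly decreasing in x > 0
   because S > 0, while x |-> x^p is increasing.  Hence y_i < y_j forces
   theta_i < theta_j, so the ordering of theta forces y (and y^p) to be
   nondecreasing.  The bounds come from comparing S with y_i times partial
   weight sums: for k >= i we have y_k >= y_i, so S >= y_i m_{>=i}, which
   gives the lower bound (and, for i = 1 where m_{>=1} = M, y_1^p >= theta_1);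
   symmetrically S <= M y_N gives y_N^p <= theta_N.  Finally (formula) shows
   that theta_i is a function of y_i, and strict monotonicity gives the
   converse. *)

Section CorrectionTerm.
Variable R : realFieldType.

Lemma correction_decreasing (S M sigma a b : R) :
  0 < S -> 0 < sigma -> 0 < a -> a < b ->
  (S / b - M) / sigma < (S / a - M) / sigma.
Proof.
move=> S_gt0 sigma_gt0 a_gt0 ab.
rewrite ltr_pM2r ?invr_gt0 // ltrD2r ltr_pM2l // ltf_pV2 ?posrE //.
exact: lt_trans ab.
Qed.

Lemma correction_ge (S M L sigma x : R) :
  0 < sigma -> 0 < x -> L * x <= S -> (L - M) / sigma <= (S / x - M) / sigma.
Proof.
move=> sigma_gt0 x_gt0 LxS.
by rewrite ler_pM2r ?invr_gt0 // lerD2r ler_pdivlMr.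
Qed.

Lemma correction_le0 (S M sigma x : R) :
  0 < sigma -> 0 < x -> S <= M * x -> (S / x - M) / sigma <= 0.
Proof.
move=> sigma_gt0 x_gt0 SMx.
by rewrite pmulr_lle0 ?invr_gt0 // subr_le0 ler_pdivrMr.
Qed.

End CorrectionTerm.

Section SteadyState.
Variables (R : realType) (N : nat) (theta m y : 'I_N -> R) (sigma p : R).
Hypothesis htheta_mono : forall i j : 'I_N, (i <= j)%N -> theta i <= theta j.
Hypothesis hm : forall i, 0 < m i.
Hypothesis hsigma : 0 < sigma.
Hypothesis hp : 0 < p.
Hypothesis hy : forall i, 0 < y i.
Hypothesis heq : forall i : 'I_N,
  \sum_(k < N) m k * (y k - y i) + sigma * (theta i - y i `^ p) * y i = 0.

Local Notation S := (\sum_(k < N) m k * y k).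
Local Notation M := (\sum_(k < N) m k).

Lemma coupling_sum i : \sum_(k < N) m k * (y k - y i) = S - M * y i.
Proof.
under eq_bigr do rewrite mulrBr.
by rewrite big_split /= sumrN -mulr_suml.
Qed.

Lemma ypow_formula i : y i `^ p = theta i + (S / y i - M) / sigma.
Proof.
have := heq i; rewrite coupling_sum => Ei.
have -> : S = sigma * (y i `^ p - theta i) * y i + M * y i by lra.
by field; rewrite ?lt0r_neq0.
Qed.

Lemma weighted_sum_gt0 (i0 : 'I_N) : 0 < S.
Proof.
rewrite (bigD1 i0) //= ltr_pwDl ?mulr_gt0 //.
by apply: sumr_ge0 => k _; rewrite mulr_ge0 // ltW.
Qed.

Lemma theta_lt_of_y_lt i j : y i < y j -> theta i < theta j.
Proof.
move=> yij.
have ypow_lt : y i `^ p < y j `^ p by rewrite gt0_ltr_powR // nnegrE ltW.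
have := @correction_decreasing _ S M sigma _ _ (weighted_sum_gt0 i) hsigma (hy i) yij.
move: ypow_lt; rewrite !ypow_formula; lra.
Qed.

Lemma y_mono (i j : 'I_N) : (i <= j)%N -> y i <= y j.
Proof.
move=> ij; rewrite leNgt; apply/negP => /theta_lt_of_y_lt.
by rewrite ltNge htheta_mono.
Qed.

Lemma ypow_mono (i j : 'I_N) : (i <= j)%N -> y i `^ p <= y j `^ p.
Proof.
move=> ij; apply: (ge0_ler_powR (ltW hp)); rewrite ?nnegrE ?(ltW (hy _)) //.
exact: y_mono.
Qed.

Lemma tail_weight_le (i : 'I_N) : (\sum_(k < N | (i <= k)%N) m k) * y i <= S.
Proof.
rewrite mulr_suml [S](bigID (fun k : 'I_N => (i <= k)%N)) /=.
apply: (@le_trans _ _ (\sum_(k < N | (i <= k)%N) m k * y k)).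
- by apply: ler_sum => k ik; rewrite ler_wpM2l ?(ltW (hm _)) ?y_mono.
- by rewrite lerDl; apply: sumr_ge0 => k _; rewrite mulr_ge0 ?ltW.
Qed.

Lemma ypow_lower i :
  theta i + ((\sum_(k < N | (i <= k)%N) m k) - M) / sigma <= y i `^ p.
Proof.
by rewrite ypow_formula lerD2l correction_ge // tail_weight_le.
Qed.

(* At the first index the whole weight sits in the tail, so y_1^p >= theta_1. *)
Lemma ypow_first (i : 'I_N) : nat_of_ord i = 0%N -> theta i <= y i `^ p.
Proof.
move=> i0; have := ypow_lower i.
by rewrite i0 (eq_bigl xpredT) // subrr mul0r addr0.
Qed.

(* At the last index y_N is maximal, so S <= M y_N and y_N^p <= theta_N. *)
Lemma ypow_last (i : 'I_N) : nat_of_ord i = N.-1 -> y i `^ p <= theta i.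
Proof.
move=> ilast; rewrite ypow_formula gerDl correction_le0 //.
rewrite mulr_suml; apply: ler_sum => k _; rewrite ler_wpM2l ?(ltW (hm _)) //.
by apply: y_mono; rewrite ilast; have := ltn_ord k; lia.
Qed.

Lemma theta_eq_iff_y_eq i j : theta i = theta j <-> y i = y j.
Proof.
split=> [thetaij | yij].
- by case: (ltgtP (y i) (y j)) => // /theta_lt_of_y_lt; rewrite thetaij ltxx.
- have := ypow_formula i; rewrite yij ypow_formula; lra.
Qed.

End SteadyState.

(* Lemma 5.2. *)
Theorem lemma5p2 (R : realType) (N : nat)
  (theta m y : 'I_N -> R) (sigma p : R)
  (htheta_pos : forall i, 0 < theta i)
  (htheta_mono : forall i j : 'I_N, (i <= j)%N -> theta i <= theta j)
  (hm : forall i, 0 < m i) (hsigma : 0 < sigma) (hp : 0 < p)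
  (hy : forall i, 0 < y i)
  (heq : forall i : 'I_N,
     \sum_(k < N) m k * (y k - y i) + sigma * (theta i - y i `^ p) * y i = 0) :
  [/\ (forall i : 'I_N, nat_of_ord i = 0%N -> theta i <= y i `^ p),
      (forall i j : 'I_N, (i <= j)%N -> y i `^ p <= y j `^ p),
      (forall i : 'I_N, nat_of_ord i = N.-1 -> y i `^ p <= theta i),
      (forall i : 'I_N,
         theta i + ((\sum_(k < N | (i <= k)%N) m k) - \sum_(k < N) m k) / sigma
           <= y i `^ p)
    & (forall i j : 'I_N, i != j -> (theta i = theta j <-> y i = y j))].
Proof.
split.
- exact: ypow_first htheta_mono hm hsigma hp hy heq.
- exact: ypow_mono htheta_mono hm hsigma hp hy heq.
- exact: ypow_last htheta_mono hm hsigma hp hy heq.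
- exact: ypow_lower htheta_mono hm hsigma hp hy heq.
- by move=> i j _; exact: theta_eq_iff_y_eq hm hsigma hp hy heq i j.
Qed.
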